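(* Let $\alpha\in\mathbb{R}$ and $0<\beta\le\frac14$. Then $\Theta_\alpha$ maps $\mathfrak{T}_1(F_1(\alpha,2\beta))$ bijectively onto $\mathfrak{T}_2(F_2(\alpha,2\beta))$; $\Theta_\alpha(\mathfrak{S}_1(F_1(\alpha,\beta)))=\mathfrak{S}_2(F_2(\alpha,\beta))$; and $\Theta_\alpha(|p|^2)=|\Theta_\alpha(p)|^2$ for every $p\in\mathfrak{T}_1(F_1(\alpha,\beta))$.
   Context: $\mathbb{T}=\mathbb{R}/\mathbb{Z}$, $e_j(x)=e^{2\pi i jx}$, $e_{(j,k)}(x,y)=e_j(x)e_k(y)$. $\mathfrak{T}_d$ is the algebra of trigonometric polynomials on $\mathbb{T}^d$ (finite frequency set); for $F\subseteq\mathbb{Z}^d$, $\mathfrak{T}_d(F)=\{t\in\mathfrak{T}_d:\mathrm{freq}(t)\subseteq F\}$ and $\mathfrak{S}_d(F)=\{|p|^2:p\in\mathfrak{T}_d(F)\}$. For $\alpha\in\mathbb{R}$, $\theta_\alpha(j)$ is the smallest integer minimizing $|\theta_\alpha(j)-j\alpha|$, and $\Theta_\alpha:\mathfrak{T}_1\to\mathfrak{T}_2$ is $\Theta_\alpha(t)(x,y)=\sum_{j}\widehat t(j)e_j(x)e_{\theta_\alpha(j)}(y)$. For $\beta>0$: $F_1(\alpha,\beta)=\{j\in\mathbb{Z}:|\theta_\alpha(j)-j\alpha|<\beta\}$ and $F_2(\alpha,\beta)=\{(j,k)\in\mathbb{Z}^2:|k-j\alpha|<\beta\}$. *)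

From HB Require Import structures.
From mathcomp Require Import all_boot all_order all_algebra.
From Stdlib Require Import Reals ZArith List ClassicalEpsilon.
Set Implicit Arguments. Unset Strict Implicit. Unset Printing Implicit Defensive.
Import GRing.Theory Num.Theory.

Definition is_theta (a : R) (j k : Z) : Prop :=
  (forall m : Z, (Rabs (IZR k - IZR j * a) <= Rabs (IZR m - IZR j * a))%R) /\
  (forall m : Z, (Rabs (IZR m - IZR j * a) <= Rabs (IZR k - IZR j * a))%R -> (k <= m)%Z).

Definition theta (a : R) (j : Z) : Z := epsilon (inhabits 0%Z) (is_theta a j).

Definition F1 (a b : R) (j : Z) : Prop := (Rabs (IZR (theta a j) - IZR j * a) < b)%R.
Definition F2 (a b : R) (jk : Z * Z) : Prop := (Rabs (IZR jk.2 - IZR jk.1 * a) < b)%R.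

(* A trigonometric polynomial on T^d is identified with its (finitely
   supported) Fourier coefficient function Z^d -> C (I = Z or Z*Z). *)
Definition finsupp (C : numClosedFieldType) (I : Type) (t : I -> C) : Prop :=
  exists l : list I, forall i, t i <> (GRing.zero : C) -> In i l.

Definition inT (C : numClosedFieldType) (I : Type) (F : I -> Prop) (t : I -> C) : Prop :=
  finsupp t /\ (forall i, t i <> (GRing.zero : C) -> F i).

Definition supp (C : numClosedFieldType) (I : Type) (t : I -> C) : list I :=
  epsilon (inhabits nil) (fun l => NoDup l /\ forall i, t i <> (GRing.zero : C) -> In i l).

(* Fourier coefficients of |p|^2 = p * conj p :  k |-> sum_j p(j+k) conj(p(j)) *)
Definition sq1 (C : numClosedFieldType) (p : Z -> C) : Z -> C :=
  fun k => \big[GRing.add/GRing.zero]_(j <- supp p) GRing.mul (p (j + k)%Z) (Num.conj (p j)).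

Definition sq2 (C : numClosedFieldType) (q : Z * Z -> C) : Z * Z -> C :=
  fun k => \big[GRing.add/GRing.zero]_(j <- supp q) GRing.mul (q ((j.1 + k.1)%Z, (j.2 + k.2)%Z)) (Num.conj (q j)).

(* Theta_alpha(t) = sum_j hat t(j) e_{(j, theta_alpha(j))} *)
Definition Theta (C : numClosedFieldType) (a : R) (t : Z -> C) : Z * Z -> C :=
  fun jk => if Z.eqb jk.2 (theta a jk.1) then t jk.1 else GRing.zero.

(* Theta_alpha moves the frequency j to (j, theta j), so it is a bijection
   between coefficient functions supported in F_1 and in F_2 as soon as every
   (j, k) in F_2(alpha, 2 beta) has k = theta j, i.e. as soon as 2 beta <= 1/2.
   For |p|^2 the coefficient at k sums p(j + k) conj(p(j)) over j; when both j
   and j + k lie in F_1(alpha, beta), the rounding errors add up to less than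
   2 beta <= 1/2, so theta(j + k) = theta j + theta k and the two convolutions
   match term by term. *)
From HB Require Import structures.
From mathcomp Require Import all_boot all_order all_algebra.
From Stdlib Require Import Reals ZArith List ClassicalEpsilon.
From Stdlib Require Import Permutation FinFun FunctionalExtensionality Lra Lia.

Import GRing.Theory Num.Theory.
Local Open Scope ring_scope.

Ltac solve_Rabs := unfold Rabs in *; repeat match goal with
  | |- context [Rcase_abs ?t] => destruct (Rcase_abs t)
  | H : context [Rcase_abs ?t] |- _ => destruct (Rcase_abs t) end; lra.

Section Rounding.
Local Open Scope R_scope.

Lemma IZR_abs_lt1_eq0 (z : Z) : Rabs (IZR z) < 1 -> z = 0%Z.
Proof.
move=> /Rabs_def2 [hi lo].
have : (-1 < z)%Z by apply: lt_IZR.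
have : (z < 1)%Z by apply: lt_IZR.
lia.
Qed.

(* Ties are rounded down, hence the half-open window. *)
Lemma is_theta_of_bounds (a : R) (j k : Z) :
  - / 2 <= IZR k - IZR j * a < / 2 -> is_theta a j k.
Proof.
move=> [lo hi]; split=> m.
- have [mk|[->|km]] := Z.lt_trichotomy m k.
  + have : IZR m <= IZR k - 1 by rewrite -minus_IZR; apply: IZR_le; lia.
    move=> *; solve_Rabs.
  + exact: Rle_refl.
  + have : IZR k + 1 <= IZR m by rewrite -plus_IZR; apply: IZR_le; lia.
    move=> *; solve_Rabs.
- move=> Hm; case: (Z_lt_le_dec m k) => // mk; exfalso.
  have : IZR m <= IZR k - 1 by rewrite -minus_IZR; apply: IZR_le; lia.
  move=> *; solve_Rabs.
Qed.

Lemma thetaP (a : R) (j : Z) : is_theta a j (theta a j).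
Proof.
apply: epsilon_spec; exists (- up (- (IZR j * a) - / 2))%Z.
apply: is_theta_of_bounds; rewrite opp_IZR.
have [] := archimed (- (IZR j * a) - / 2); lra.
Qed.

Lemma theta_unique (a : R) (j k : Z) :
  Rabs (IZR k - IZR j * a) < / 2 -> k = theta a j.
Proof.
move=> Hk; have [/(_ k) Hmin _] := thetaP a j.
suff : (k - theta a j = 0)%Z by lia.
by apply: IZR_abs_lt1_eq0; rewrite minus_IZR; solve_Rabs.
Qed.

Lemma theta_add {a b : R} {j k : Z} : b <= / 4 ->
  F1 a b j -> F1 a b (j + k) -> theta a (j + k) = (theta a j + theta a k)%Z.
Proof.
rewrite /F1 plus_IZR => hb Hj Hjk.
suff : (theta a (j + k) - theta a j)%Z = theta a k by lia.
by apply: theta_unique; rewrite minus_IZR; solve_Rabs.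
Qed.

End Rounding.

Section ListSums.
Variable V : nmodType.

Lemma big_List_filter_neq0 (I : Type) (L : list I) (F : I -> V) :
  \sum_(j <- L) F j = \sum_(j <- List.filter (fun x => F x != 0) L) F j.
Proof.
elim: L => [|x L IH] //=.
by rewrite big_cons; case: eqP => [->|_]; rewrite ?big_cons IH ?add0r.
Qed.

Lemma big_Permutation (I : Type) (L1 L2 : list I) (F : I -> V) :
  Permutation L1 L2 -> \sum_(j <- L1) F j = \sum_(j <- L2) F j.
Proof.
elim=> [|x l l' _ IH|x y l|l l' l'' _ IH1 _ IH2] //.
- by rewrite !big_cons IH.
- by rewrite !big_cons addrCA.
- by rewrite IH1 IH2.
Qed.

Lemma big_List_map (I J : Type) (L : list I) (f : I -> J) (G : J -> V) :
  \sum_(j <- List.map f L) G j = \sum_(j <- L) G (f j).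
Proof. by elim: L => [|x L IH]; rewrite ?big_nil // [List.map _ _]/= !big_cons IH. Qed.

Lemma eq_big_NoDup_support (I : Type) (L1 L2 : list I) (F : I -> V) :
  NoDup L1 -> NoDup L2 ->
  (forall x, F x <> 0 -> In x L1) -> (forall x, F x <> 0 -> In x L2) ->
  \sum_(j <- L1) F j = \sum_(j <- L2) F j.
Proof.
move=> N1 N2 S1 S2; rewrite [LHS]big_List_filter_neq0 [RHS]big_List_filter_neq0.
apply: big_Permutation; apply: NoDup_Permutation; try exact: NoDup_filter.
move=> x; rewrite !filter_In.
by split=> -[_ Fx]; split=> //; [apply: S2 | apply: S1]; apply/eqP.
Qed.

End ListSums.

Lemma suppP {C : numClosedFieldType} {I : Type}
    (dec : forall x y : I, {x = y} + {x <> y}) {t : I -> C} :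
  finsupp t -> NoDup (supp t) /\ forall i, t i <> 0 -> In i (supp t).
Proof.
move=> [l Hl].
apply: (epsilon_spec (inhabits nil) (fun l => NoDup l /\ forall i, t i <> 0 -> In i l)).
exists (nodup dec l); split; first exact: NoDup_nodup.
by move=> i Hi; apply/nodup_In; apply: Hl.
Qed.

Lemma Zpair_eq_dec (x y : Z * Z) : {x = y} + {x <> y}.
Proof. decide equality; apply Z.eq_dec. Qed.

Section Theta.
Context {C : numClosedFieldType} {a : R}.

Lemma Theta_finsupp {t : Z -> C} : finsupp t -> finsupp (Theta a t).
Proof.
move=> [l Hl]; exists (List.map (fun j => (j, theta a j)) l) => -[j k].
rewrite /Theta /=; case: Z.eqb_spec => [->|_] H //.
by apply: in_map; apply: Hl.
Qed.

Lemma Theta_inT {F : R} {t : Z -> C} : inT (F1 a F) t -> inT (F2 a F) (Theta a t).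
Proof.
move=> [ft HF]; split; first exact: Theta_finsupp.
by move=> [j k]; rewrite /Theta /=; case: Z.eqb_spec => [->|_] H //; apply: HF.
Qed.

Lemma Theta_inj : injective (@Theta C a).
Proof.
move=> t1 t2 E; apply: functional_extensionality => j.
by have := f_equal (fun f => f (j, theta a j)) E; rewrite /Theta /= Z.eqb_refl.
Qed.

Lemma Theta_onto {F : R} {u : Z * Z -> C} : (F <= / 2)%R ->
  inT (F2 a F) u -> exists t : Z -> C, inT (F1 a F) t /\ Theta a t = u.
Proof.
move=> hF [[l Hl] HF]; exists (fun j => u (j, theta a j)); split.
- split; last by move=> j /HF.
  exists (List.map fst l) => j H; apply/in_map_iff.
  by exists (j, theta a j); split=> //; apply: Hl.
- apply: functional_extensionality => -[j k]; rewrite /Theta /=.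
  case: Z.eqb_spec => [->|Hk] //.
  have [//|/eqP uk] := eqVneq (u (j, k)) 0.
  have := HF _ uk; rewrite /F2 /= => Hjk.
  by case: Hk; apply: theta_unique; lra.
Qed.

Lemma sq2_Theta (p : Z -> C) (k : Z * Z) : finsupp p ->
  sq2 (Theta a p) k = \sum_(j <- supp p)
    Theta a p ((j + k.1)%Z, (theta a j + k.2)%Z) * Num.conj (p j).
Proof.
move=> fp; have [Np Sp] := suppP Z.eq_dec fp.
have [Nq Sq] := suppP Zpair_eq_dec (Theta_finsupp fp).
have conj_neq0 (q : Z * Z -> C) (x y : Z * Z) : q x * Num.conj (q y) <> 0 -> q y <> 0.
  by move=> H E; apply: H; rewrite E conjC0 mulr0.
rewrite /sq2 (@eq_big_NoDup_support _ _ _ (List.map (fun j => (j, theta a j)) (supp p))).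
- by rewrite big_List_map; apply: eq_bigr => j _; rewrite /Theta /= Z.eqb_refl.
- exact: Nq.
- by apply: Injective_map_NoDup => // x y [].
- by move=> J /conj_neq0; apply: Sq.
- move=> [j l] /conj_neq0; rewrite /Theta /=.
  by case: Z.eqb_spec => [->|_] H //; apply: in_map; apply: Sp.
Qed.

Lemma Theta_sq1 {b : R} {p : Z -> C} : (b <= / 4)%R ->
  inT (F1 a b) p -> Theta a (sq1 p) = sq2 (Theta a p).
Proof.
move=> hb [fp Fp]; apply: functional_extensionality => -[k1 k2].
rewrite sq2_Theta //= /Theta /sq1 /=.
have term_eq j : Theta a p ((j + k1)%Z, (theta a j + k2)%Z) * Num.conj (p j) =
    if Z.eqb k2 (theta a k1) then p (j + k1)%Z * Num.conj (p j) else 0.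
  rewrite /Theta /=.
  have [->|/eqP pj] := eqVneq (p j) 0; first by rewrite conjC0 !mulr0; case: ifP.
  have [->|/eqP pjk] := eqVneq (p (j + k1)%Z) 0.
    by case: ifP; case: ifP; rewrite ?mul0r.
  rewrite (theta_add hb (Fp _ pj) (Fp _ pjk)).
  by do 2 case: Z.eqb_spec => ? //; rewrite ?mul0r //; lia.
rewrite (eq_bigr _ (fun j _ => term_eq j)).
by case: ifP => _; [|rewrite big1].
Qed.

End Theta.

Theorem lemma4 (C : numClosedFieldType) (a b : R)
  (hb0 : (0 < b)%R) (hb : (b <= / 4)%R) :
  (forall t : Z -> C, inT (F1 a (2 * b)) t -> inT (F2 a (2 * b)) (Theta a t)) /\
  (forall t1 t2 : Z -> C, inT (F1 a (2 * b)) t1 -> inT (F1 a (2 * b)) t2 ->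
     Theta a t1 = Theta a t2 -> t1 = t2) /\
  (forall u : Z * Z -> C, inT (F2 a (2 * b)) u ->
     exists t : Z -> C, inT (F1 a (2 * b)) t /\ Theta a t = u) /\
  (forall u : Z * Z -> C,
     (exists p : Z -> C, inT (F1 a b) p /\ u = Theta a (sq1 p)) <->
     (exists q : Z * Z -> C, inT (F2 a b) q /\ u = sq2 q)) /\
  (forall p : Z -> C, inT (F1 a b) p -> Theta a (sq1 p) = sq2 (Theta a p)).
Proof.
have hb2 : (b <= / 2)%R by lra.
have h2b : (2 * b <= / 2)%R by lra.
split; first by move=> t; apply: Theta_inT.
split; first by move=> t1 t2 _ _; apply: Theta_inj.
split; first by move=> u; apply: Theta_onto.
split; last by move=> p; apply: Theta_sq1.
move=> u; split.
- move=> [p [Hp ->]]; exists (Theta a p).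
  by split; [exact: Theta_inT | exact: Theta_sq1 hb Hp].
- move=> [q [Hq ->]]; have [p [Hp <-]] := Theta_onto hb2 Hq.
  by exists p; split=> //; rewrite (Theta_sq1 hb Hp).
Qed.
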